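(* For all integers $k,n$ with $n\geq 3$ and $2\leq k\leq n$, $\mathrm{ldim}_f(K_k\square K_n)=\frac{n}{2}$.
   Context: $K_k$ denotes the complete graph on $k$ vertices; $d$ is the shortest-path distance. For an edge $uv$ of a connected graph $X$, $L_X(uv)=\{x\in V(X): d_X(u,x)\neq d_X(v,x)\}$. A function $f:V(X)\to[0,1]$ is a local resolving function of $X$ if $\sum_{x\in L_X(uv)}f(x)\geq 1$ for every edge $uv$; $\mathrm{ldim}_f(X)$ is the minimum of $\sum_{v}f(v)$ over all local resolving functions. The Cartesian product $G\square H$ has vertex set $V(G)\times V(H)$, with $(u_1,v_1)$ adjacent to $(u_2,v_2)$ iff ($u_1u_2\in E(G)$ and $v_1=v_2$) or ($u_1=u_2$ and $v_1v_2\in E(H)$). *)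

From HB Require Import structures.
From mathcomp Require Import all_boot all_order all_algebra.
Set Implicit Arguments. Unset Strict Implicit. Unset Printing Implicit Defensive.
Import Order.TTheory GRing.Theory Num.Theory.

(* A simple graph is a symmetric irreflexive relation e : rel T on a finType T. *)

Definition complete_graph (k : nat) : rel 'I_k := fun i j => i != j.
Arguments complete_graph k : clear implicits.

Definition cart_prod (T1 T2 : finType) (eG : rel T1) (eH : rel T2)
  : rel (T1 * T2) :=
  fun x y => ((eG x.1 y.1) && (x.2 == y.2)) || ((x.1 == y.1) && (eH x.2 y.2)).

Fixpoint walk_n (T : finType) (e : rel T) (m : nat) (x y : T) : bool :=
  match m with
  | 0 => x == y
  | m'.+1 => [exists z, e x z && walk_n e m' z y]
  end.

(* In a connected graph this m is < #|T|, so searching in [0, #|T|) suffices;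
   (for unreachable pairs the value is #|T|, irrelevant for connected graphs). *)
Definition dist (T : finType) (e : rel T) (x y : T) : nat :=
  find (fun m => walk_n e m x y) (iota 0 #|T|).

Definition Lset (T : finType) (e : rel T) (u v : T) : {set T} :=
  [set x | dist e u x != dist e v x].

Local Open Scope ring_scope.

Definition local_resolving_function (R : realFieldType) (T : finType)
  (e : rel T) (f : T -> R) : Prop :=
  (forall x, 0 <= f x <= 1) /\
  (forall u v, e u v -> 1 <= \sum_(x in Lset e u v) f x).

Definition is_ldimf (R : realFieldType) (T : finType) (e : rel T) (r : R) : Prop :=
  (exists f : T -> R, local_resolving_function e f /\ \sum_(x : T) f x = r) /\
  (forall f : T -> R, local_resolving_function e f -> r <= \sum_(x : T) f x).

(* View K_k □ K_n as a k × n grid.  Its distance is the Hamming distance, so an edge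
   inside a row (changing the column) is resolved exactly by the vertices of the two
   columns through its ends, and an edge inside a column by those of the two rows.
   With C_j the weight of column j, the row edges force C_i + C_j >= 1 for i <> j, and
   pairing each column with its cyclic successor bounds the total weight below by n/2.
   The constant weight 1/(2k) attains n/2: a row edge is resolved by 2k vertices, a
   column edge by 2n >= 2k. *)
From HB Require Import structures.
From mathcomp Require Import all_boot all_order all_algebra.
From mathcomp Require Import zify ring lra.
Import Order.TTheory GRing.Theory Num.Theory.

Lemma walk_n1 (T : finType) (e : rel T) (x y : T) : walk_n e 1 x y = e x y.
Proof.
apply/existsP/idP => [[z /andP[exz /eqP<-]] // | exy].
by exists y; rewrite exy eqxx.
Qed.

Section CompleteProduct.

Variables k n : nat.
Hypothesis kn_gt2 : (2 < k * n)%N.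
Local Notation e := (cart_prod (complete_graph k) (complete_graph n)).

(* The hypothesis [2 < k * n] lets [dist] search far enough to see distance 2. *)
Lemma dist_cart_complete (x y : 'I_k * 'I_n) :
  dist e x y = ((x.1 != y.1) + (x.2 != y.2))%N.
Proof.
rewrite /dist card_prod !card_ord -(subnKC kn_gt2) iotaD /= -/(walk_n e 1 x y) walk_n1.
case: x y => [x1 x2] [y1 y2]; rewrite /cart_prod /complete_graph /= xpair_eqE.
case: (eqVneq x1 y1) => [->|x1y1]; case: (eqVneq x2 y2) => [->|x2y2] //=.
rewrite ifT //; apply/existsP; exists (y1, x2); rewrite /= x1y1 eqxx /=.
by apply/existsP; exists (y1, y2); rewrite /= !eqxx x2y2.
Qed.

Lemma Lset_col_edge (u v : 'I_k * 'I_n) : u.1 != v.1 -> u.2 = v.2 ->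
  Lset e u v = [set x | (x.1 == u.1) || (x.1 == v.1)].
Proof.
case: u v => [u1 u2] [v1 v2] /= u1v1 <-; apply/setP => -[x1 x2].
rewrite !inE !dist_cart_complete /= eqn_add2r.
have [<-|_] := eqVneq u1 x1; first by rewrite (eq_sym v1) u1v1.
by rewrite (eq_sym x1); case: (v1 == x1).
Qed.

Lemma Lset_row_edge (u v : 'I_k * 'I_n) : u.1 = v.1 -> u.2 != v.2 ->
  Lset e u v = [set x | (x.2 == u.2) || (x.2 == v.2)].
Proof.
case: u v => [u1 u2] [v1 v2] /= <- u2v2; apply/setP => -[x1 x2].
rewrite !inE !dist_cart_complete /= eqn_add2l.
have [<-|_] := eqVneq u2 x2; first by rewrite (eq_sym v2) u2v2.
by rewrite (eq_sym x2); case: (v2 == x2).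
Qed.

End CompleteProduct.

Local Open Scope ring_scope.

Section PairSums.

Variables (R : nmodType) (T1 T2 : finType).
Implicit Type F : T1 * T2 -> R.

Lemma sum_two_rows F (a b : T1) : a != b ->
  \sum_(x in [set x | (x.1 == a) || (x.1 == b)]) F x
    = \sum_j F (a, j) + \sum_j F (b, j).
Proof.
move=> ab; transitivity (\sum_(i | pred2 a b i) \sum_(j | predT j) F (i, j)).
  by rewrite pair_big; apply: eq_big => [[i j]|[i j] _] //=; rewrite inE andbT.
rewrite (bigD1 a) /= ?eqxx //; congr (_ + _); apply: (big_pred1 b) => i /=.
by case: (eqVneq i b) => [->|_]; rewrite ?orbF ?andbN // orbT eq_sym ab.
Qed.

Lemma sum_two_cols F (a b : T2) : a != b ->
  \sum_(x in [set x | (x.2 == a) || (x.2 == b)]) F x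
    = \sum_i F (i, a) + \sum_i F (i, b).
Proof.
move=> ab; transitivity (\sum_(i | predT i) \sum_(j | pred2 a b j) F (i, j)).
  by rewrite pair_big; apply: eq_big => [[i j]|[i j] _] //=; rewrite inE.
rewrite -big_split; apply: eq_bigr => i _ /=.
rewrite (bigD1 a) /= ?eqxx //; congr (_ + _); apply: (big_pred1 b) => j /=.
by case: (eqVneq j b) => [->|_]; rewrite ?orbF ?andbN // orbT eq_sym ab.
Qed.

Lemma sum_by_cols F : \sum_x F x = \sum_j \sum_i F (i, j).
Proof. by rewrite exchange_big pair_big; apply: eq_bigr => -[]. Qed.

End PairSums.

Lemma pairwise_ge1_sum_ge_half (R : realFieldType) (n : nat) (C : 'I_n -> R) :
  (2 <= n)%N -> (forall i j, i != j -> 1 <= C i + C j) ->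
  n%:R / 2 <= \sum_i C i.
Proof.
move=> n_ge2 C_pair.
have ordS_neq (i : 'I_n) : ordS i != i.
  apply/eqP => /(congr1 val) /=; have := ltn_ord i.
  by rewrite leq_eqVlt => /orP[/eqP iSn | ?]; rewrite ?iSn ?modnn ?modn_small; lia.
have : \sum_(i < n) (1 : R) <= \sum_(i < n) (C (ordS i) + C i).
  by apply: ler_sum => i _; apply: C_pair.
have sum_ordS : \sum_i C (ordS i) = \sum_i C i.
  by rewrite [RHS](reindex_inj (@ordS_inj n)).
rewrite big_split /= sum_ordS sumr_const card_ord.
rewrite -mulr_natl mulr1; lra.
Qed.

Section ResolvingBounds.

Variables (R : realFieldType) (k n : nat).
Hypotheses (k_gt0 : (0 < k)%N) (kn_gt2 : (2 < k * n)%N).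
Local Notation e := (cart_prod (complete_graph k) (complete_graph n)).

Lemma sum_Lset_col_edge (F : 'I_k * 'I_n -> R) (u v : 'I_k * 'I_n) :
  u.1 != v.1 -> u.2 = v.2 ->
  \sum_(x in Lset e u v) F x = \sum_j F (u.1, j) + \sum_j F (v.1, j).
Proof. by move=> u1v1 u2v2; rewrite Lset_col_edge // sum_two_rows. Qed.

Lemma sum_Lset_row_edge (F : 'I_k * 'I_n -> R) (u v : 'I_k * 'I_n) :
  u.1 = v.1 -> u.2 != v.2 ->
  \sum_(x in Lset e u v) F x = \sum_i F (i, u.2) + \sum_i F (i, v.2).
Proof. by move=> u1v1 u2v2; rewrite Lset_row_edge // sum_two_cols. Qed.

Lemma const_local_resolving : (k <= n)%N ->
  local_resolving_function e (fun=> (2 * k%:R)^-1 : R).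
Proof.
move=> k_le_n; set c : R := (2 * k%:R)^-1.
have k_ge1 : 1 <= k%:R :> R by rewrite ler1n.
have n_ge_k : k%:R <= n%:R :> R by rewrite ler_nat.
have c_ge0 : 0 <= c by rewrite invr_ge0; lra.
have c2k : c * (2 * k%:R) = 1 by rewrite mulVf //; lra.
split=> [x | u v].
  by apply/andP; split=> //; nra.
case/orP=> [/andP[u1v1 /eqP u2v2] | /andP[/eqP u1v1 u2v2]].
- have kc_le_nc : k%:R * c <= n%:R * c by rewrite ler_wpM2r.
  by rewrite sum_Lset_col_edge // !sumr_const card_ord -mulr_natl; lra.
- by rewrite sum_Lset_row_edge // !sumr_const card_ord -mulr_natl; lra.
Qed.

Lemma local_resolving_sum_ge_half (f : 'I_k * 'I_n -> R) : (2 <= n)%N ->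
  local_resolving_function e f -> n%:R / 2 <= \sum_x f x.
Proof.
move=> n_ge2 [_ f_res]; rewrite sum_by_cols.
apply: pairwise_ge1_sum_ge_half => // i j ij.
pose a : 'I_k := Ordinal k_gt0.
have edge : e (a, i) (a, j) by apply/orP; right; apply/andP.
by have := f_res _ _ edge; rewrite sum_Lset_row_edge.
Qed.

End ResolvingBounds.

Theorem theorem3p14 (R : realFieldType) (k n : nat) :
  (3 <= n)%N -> (2 <= k)%N -> (k <= n)%N ->
  is_ldimf (cart_prod (complete_graph k) (complete_graph n))
           (n%:R / 2%:R : R).
Proof.
move=> n_ge3 k_ge2 k_le_n.
have k_gt0 : (0 < k)%N by lia.
have kn_gt2 : (2 < k * n)%N by nia.
split; last by move=> f; apply: local_resolving_sum_ge_half => //; lia.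
exists (fun=> (2 * k%:R)^-1); split; first exact: const_local_resolving.
have k_neq0 : k%:R != 0 :> R by rewrite pnatr_eq0 -lt0n.
rewrite sumr_const card_prod !card_ord -[_ *+ _]mulr_natl natrM.
by field; rewrite k_neq0.
Qed.
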